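(* Let $p>3$ be a prime. Then $$\sum_{k=0}^{[p/4]}\binom{4k}{2k}\frac1{18^k}\equiv2\Big(\frac6p\Big)-\Big(\frac3p\Big)\pmod p.$$
   Context: $[x]$ is the greatest integer $\le x$; $(\frac{\cdot}{p})$ is the Legendre symbol. *)

From HB Require Import structures.
From mathcomp Require Import all_boot all_order all_algebra.
Set Implicit Arguments. Unset Strict Implicit. Unset Printing Implicit Defensive.

Definition legendre (a p : nat) : int :=
  if p %| a then 0%R
  else if [exists x : 'I_p, (x * x == a %[mod p])] then 1%R else (-1)%R.

From HB Require Import structures.
From mathcomp Require Import all_boot all_order all_algebra finfield.
From mathcomp Require Import zify ring.
Import GRing.Theory.
Set Implicit Arguments. Unset Strict Implicit.
Local Open Scope ring_scope.

(* Write p = 2h + 1, so that [p/4] = [h/2].  The proof has three ingredients.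
   - Mod p, C(2n, n) = (-4)^n C(h, n) for n <= h, because h = -1/2 in 'F_p.
     Hence C(4k, 2k) / 18^k = C(h, 2k) 8^k / 9^k, and 3^h times the sum is
     sum_k C(h, 2k) 3^(h - 2k) 8^k, the "rational part" of (3 + 2 sqrt 2)^h.
   - We realise sqrt d by the 2 x 2 matrix S = [[0, d], [1, 0]] with S^2 = d,
     so that the rational part of (a + b sqrt d)^n is the (0, 0) entry of
     (a + b S)^n.  Since 3 + 2 sqrt 2 = (1 + sqrt 2)^2, the Frobenius identity
     (1 + S)^p = 1 + 2^h S evaluates that entry to 2^(h + 1) - 1.
   - Euler's criterion (a / p) = a^h in 'F_p, proved by counting the roots of
     'X^h - 1, and Fermat's little theorem (3^h)^2 = 1 then turn
     (2^(h + 1) - 1) 3^h into 2 (6 / p) - (3 / p). *)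

Section SqrtMatrix.
Variables (R : comNzRingType) (d : R).

Definition sqrt_mx : 'M[R]_2 :=
  \matrix_(i, j) (if i == j then 0 else if i == 0 then d else 1).

Lemma sqrt_mx_sqr : sqrt_mx ^+ 2 = d%:M.
Proof.
apply/matrixP => i j; rewrite expr2 -mulmxE !mxE big_ord_recl big_ord1 !mxE.
by case: i => [[|[|i]] ?]; case: j => [[|[|j]] ?];
  rewrite //= ?mulr0 ?mul0r ?addr0 ?add0r ?mulr1 ?mul1r.
Qed.

Lemma sqrt_mx_even k : sqrt_mx ^+ k.*2 = (d ^+ k)%:M.
Proof. by rewrite -mul2n exprM sqrt_mx_sqr rmorphXn. Qed.

Lemma sqrt_mx_odd k : sqrt_mx ^+ k.*2.+1 = d ^+ k *: sqrt_mx.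
Proof. by rewrite exprSr sqrt_mx_even -mulmxE mul_scalar_mx. Qed.

Lemma sqrt_mx_pow00 i : (sqrt_mx ^+ i) 0 0 = if odd i then 0 else d ^+ i./2.
Proof.
rewrite -{1}(odd_double_half i); case: (odd i) => /=.
  by rewrite add1n sqrt_mx_odd !mxE mulr0.
by rewrite add0n sqrt_mx_even !mxE.
Qed.

(* The i-th binomial term of (a + b sqrt d)^n, with its sqrt d ^ i
   replaced by its rational part. *)
Definition rational_term (a b : R) n i : R :=
  'C(n, i)%:R * a ^+ (n - i) * b ^+ i * (if odd i then 0 else d ^+ i./2).

Lemma sqrt_mx_binomial00 (a b : R) n :
  ((a%:M + b *: sqrt_mx) ^+ n) 0 0 = \sum_(i < n.+1) rational_term a b n i.
Proof.
rewrite exprDn_comm; last by rewrite /GRing.comm -!mulmxE scalar_mxC.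
rewrite summxE; apply: eq_bigr => i _.
rewrite mulmxnE -rmorphXn exprZn -mulmxE mul_scalar_mx !mxE sqrt_mx_pow00.
by rewrite /rational_term -mulr_natl; ring.
Qed.

End SqrtMatrix.

Lemma central_bin_rec n :
  (n.+1 * 'C(n.+1.*2, n.+1) = (n.*2.+1).*2 * 'C(n.*2, n))%N.
Proof.
have diag1 := mul_bin_diag n.*2.+1 n.
have diag2 := mul_bin_diag n.*2.+2 n.
have bin_sym : 'C(n.*2.+1, n) = 'C(n.*2.+1, n.+1).
  rewrite -(@bin_sub n.*2.+1 n); last by rewrite -addnn; lia.
  by congr 'C(_, _); rewrite -addnn; lia.
move: diag1 diag2; rewrite /= bin_sym doubleS.
move: 'C(n.*2, n) 'C(n.*2.+1, n.+1) 'C(n.*2.+2, n.+1) => c1 c2 c3.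
rewrite -!muln2; nia.
Qed.

Lemma sum_even_indices (V : nmodType) (f : nat -> V) n :
  (forall i, odd i -> f i = 0) -> \sum_(i < n) f i = \sum_(k < uphalf n) f k.*2.
Proof.
move=> f_odd; elim: n => [|n IHn]; first by rewrite !big_ord0.
rewrite big_ord_recr /= IHn uphalf_half.
case: (boolP (odd n)) => [n_odd | n_even]; first by rewrite f_odd // addr0.
rewrite big_ord_recr /= add0n; congr (_ + f _).
by rewrite -[LHS](odd_double_half n) (negbTE n_even).
Qed.

Section PrimeField.
Variable p : nat.
Hypotheses (p_pr : prime p) (p_odd : odd p).
Local Notation h := p./2.

Lemma p_half : p = h.*2.+1.
Proof. by rewrite -[LHS]odd_double_half p_odd. Qed.

Lemma half_gt0 : (0 < h)%N.
Proof. by have := prime_gt1 p_pr; rewrite {1}p_half; case: (h). Qed.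

Lemma natFp_eq0 n : ((n%:R : 'F_p) == 0) = (p %| n)%N.
Proof. by rewrite (dvdn_pcharf (pchar_Fp p_pr)). Qed.

Lemma natFp_neq0 n : (0 < n < p)%N -> (n%:R : 'F_p) != 0.
Proof. by case/andP=> n_gt0 n_lt_p; rewrite natFp_eq0 gtnNdvd. Qed.

Lemma natFp_inj m n : (m%:R : 'F_p) = n%:R -> m = n %[mod p].
Proof. by move/(congr1 val); rewrite /= !val_Fp_nat. Qed.

Lemma fermat_half (y : 'F_p) : y != 0 -> y ^+ h.*2 = 1.
Proof.
move=> y_neq0; apply: (mulfI y_neq0); rewrite -exprS -p_half mulr1.
by rewrite -[in RHS](expf_card y) card_Fp.
Qed.

Lemma sqr_half (y : 'F_p) : y != 0 -> (y ^+ 2) ^+ h = 1.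
Proof. by move=> y_neq0; rewrite -exprM mulnC muln2 fermat_half. Qed.

Definition half_squares : seq 'F_p := [seq (i%:R : 'F_p) ^+ 2 | i <- iota 1 h].

Lemma half_squares_uniq : uniq half_squares.
Proof.
rewrite map_inj_in_uniq ?iota_uniq // => i j; rewrite !mem_iota => i_bd j_bd.
move/eqP; rewrite -subr_eq0 subr_sqr mulf_eq0 subr_eq0 -natrD natFp_eq0.
have -> : (p %| i + j)%N = false by rewrite gtnNdvd //; move: i_bd j_bd (p_half); lia.
rewrite orbF => /eqP /natFp_inj; rewrite !modn_small //; move: i_bd j_bd (p_half); lia.
Qed.

(* Counting roots of 'X^h - 1: the h squares above are all of its roots. *)
Lemma half_power_one_square (x : 'F_p) : x ^+ h = 1 -> x \in half_squares.
Proof.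
move=> xh1; apply/negPn/negP => x_nsq.
have size_q : size ('X^h - 1 : {poly 'F_p}) = h.+1 by rewrite -polyC1 size_XnsubC ?half_gt0.
have q_neq0 : ('X^h - 1 : {poly 'F_p}) != 0 by rewrite -size_poly_eq0 size_q.
have roots : all (root ('X^h - 1)) (x :: half_squares).
  rewrite /= rootE !hornerE xh1 subrr eqxx /=.
  apply/allP => _ /mapP [i i_in ->]; rewrite rootE !hornerE sqr_half ?subrr //.
  by apply: natFp_neq0; move: i_in; rewrite mem_iota; move: (p_half); lia.
have := max_poly_roots q_neq0 roots; rewrite /= x_nsq half_squares_uniq size_q.
by rewrite size_map size_iota ltnn => /(_ isT).
Qed.

Lemma euler_criterion a :
  ~~ (p %| a)%N -> ((legendre a p)%:~R : 'F_p) = a%:R ^+ h.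
Proof.
rewrite -natFp_eq0 => a_neq0; rewrite /legendre -natFp_eq0 (negbTE a_neq0).
case: existsP => [[x /eqP x_sqr] | a_nonres].
  have a_sqr : (a%:R : 'F_p) = (x : nat)%:R ^+ 2.
    by rewrite -(Fp_nat_mod p_pr a) -x_sqr Fp_nat_mod // natrM expr2.
  rewrite a_sqr sqr_half //; apply: contraNneq a_neq0 => x0.
  by rewrite a_sqr x0 expr0n.
have : (a%:R ^+ h : 'F_p) ^+ 2 == 1 by rewrite exprAC sqr_half.
rewrite sqrf_eq1 => /orP [/eqP /half_power_one_square /mapP [i i_in a_sqr] | /eqP -> //].
exfalso; apply: a_nonres.
have i_lt_p : (i < p)%N by move: i_in; rewrite mem_iota; move: (p_half); lia.
exists (Ordinal i_lt_p); apply/eqP/esym/natFp_inj.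
by rewrite natrM -expr2 -a_sqr.
Qed.

(* Mod p, C(2n, n) = (-4)^n C((p - 1)/2, n), since (p - 1)/2 = -1/2. *)
Lemma central_bin_mod n :
  (n <= h)%N -> ('C(n.*2, n)%:R : 'F_p) = (- 4%:R) ^+ n * 'C(h, n)%:R.
Proof.
elim: n => [|n IHn] n_le_h; first by rewrite !bin0 expr0 mul1r.
have n1_neq0 : (n.+1%:R : 'F_p) != 0 by apply: natFp_neq0; move: n_le_h (p_half); lia.
apply: (mulfI n1_neq0); rewrite -natrM central_bin_rec natrM IHn; last by lia.
rewrite [RHS]mulrCA -natrM mul_bin_left natrM natrB; last by lia.
have p0 : (h%:R * 2%:R + 1 : 'F_p) = 0.
  by rewrite -natrM -mulrSr muln2 -p_half pchar_Fp_0.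
rewrite -!muln2 !natrM mulrSr natrM exprS.
(* The two sides differ by 2 (-4)^n C(h, n) (2h + 1), which is 0 mod p. *)
by rewrite -[LHS]subr0 -(mulr0 (2%:R * ((- 4%:R) ^+ n * 'C(h, n)%:R))) -p0; ring.
Qed.

(* Frobenius: (1 + sqrt d)^p = 1 + sqrt d ^ p = 1 + d^h sqrt d. *)
Lemma sqrt_mx_frobenius (d : 'F_p) : (1 + sqrt_mx d) ^+ p = 1 + d ^+ h *: sqrt_mx d.
Proof.
have pcharM : p \in [pchar 'M['F_p]_2].
  by rewrite !inE p_pr /= -scaler_nat pchar_Fp_0 // scale0r.
rewrite -(pFrobenius_autE pcharM) pFrobenius_autD_comm; last exact/commr_sym/commr1.
rewrite !pFrobenius_autE expr1n.
have -> : sqrt_mx d ^+ p = sqrt_mx d ^+ h.*2.+1 by rewrite -p_half.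
by rewrite sqrt_mx_odd.
Qed.

(* Half of the Frobenius identity: with X = (1 + sqrt d)^(2h), the relation
   X (1 + sqrt d) = 1 + d^h sqrt d determines the (0, 0) entry of X. *)
Lemma sqrt_mx_half_power (d : 'F_p) :
  (d - 1) * (((1 + d)%:M + 2%:R *: sqrt_mx d) ^+ h) 0 0 = d ^+ h.+1 - 1.
Proof.
have sqr1S : (1 + sqrt_mx d) ^+ 2 = (1 + d)%:M + 2%:R *: sqrt_mx d.
  by rewrite addrC sqrrD1 sqrt_mx_sqr raddfD scaler_nat /= addrC addrA.
set X := _ ^+ h.
have XE : X * (1 + sqrt_mx d) = 1 + d ^+ h *: sqrt_mx d.
  by rewrite /X -sqr1S -exprM -exprSr mul2n -p_half sqrt_mx_frobenius.
have := congr1 (fun M : 'M_2 => M 0 0) XE; have := congr1 (fun M : 'M_2 => M 0 1) XE.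
rewrite /= -!mulmxE !mxE !big_ord_recl !big_ord0 !mxE /= !(addr0, add0r, mulr0, mulr1, mulr1n).
rewrite [X 0 0](_ : _ = X 0 ord0) //.
move: (X 0 ord0) (X 0 (lift ord0 ord0)) => a b E01 E00.
by rewrite mulrBl mul1r exprSr -E01 -E00; ring.
Qed.

(* Each term of the corollary's sum, cleared of the denominator 18^k and
   multiplied by 3^h, is the (2k)-th term of the binomial expansion of
   (3 + 2 sqrt 2)^h. *)
Lemma term_identity k : (k.*2 <= h)%N ->
  ('C(4 * k, 2 * k)%:R * 3%:R ^+ h : 'F_p) =
  'C(h, k.*2)%:R * 3%:R ^+ (h - k.*2) * 2%:R ^+ k.*2 * 2%:R ^+ k * 18%:R ^+ k.
Proof.
move=> k_le_h; rewrite (_ : 4 * k = k.*2.*2)%N; last by rewrite -!mul2n mulnA.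
rewrite mul2n central_bin_mod //.
have -> : (- 4%:R : 'F_p) ^+ k.*2 = (16 ^ k)%:R by rewrite -mul2n exprM sqrrN -!natrX.
rewrite -!natrX -!natrM; congr _%:R.
rewrite -[X in (3 ^ X)%N](subnK k_le_h) expnD -!mul2n !expnM.
have pow144 : (16 ^ k * (3 ^ 2) ^ k = (2 ^ 2) ^ k * 2 ^ k * 18 ^ k)%N.
  by rewrite -!expnMn.
nia.
Qed.

(* The rational part of (3 + 2 sqrt 2)^h = (1 + sqrt 2)^(p - 1) is
   2^(h + 1) - 1. *)
Lemma rational_part_3_2sqrt2 :
  \sum_(i < h.+1) rational_term (2%:R : 'F_p) 3%:R 2%:R h i = 2%:R ^+ h.+1 - 1.
Proof.
rewrite -sqrt_mx_binomial00 -(sqrt_mx_half_power 2%:R).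
by rewrite -mulrS mulrSr addrK mul1r.
Qed.

Lemma scaled_sum : (3 < p)%N ->
  (\sum_(k < uphalf h.+1) 'C(4 * k, 2 * k)%:R / (18%:R : 'F_p) ^+ k) * 3%:R ^+ h
  = 2%:R ^+ h.+1 - 1.
Proof.
move=> p_gt3; have n18 : (18%:R : 'F_p) != 0.
  by rewrite (_ : 18 = 2 * 3 ^ 2)%N // natrM natrX mulf_neq0 ?expf_neq0 ?natFp_neq0 //; lia.
rewrite mulr_suml -rational_part_3_2sqrt2 sum_even_indices; last first.
  by move=> i i_odd; rewrite /rational_term i_odd mulr0.
apply: eq_bigr => [[k /= k_lt]] _; rewrite /rational_term odd_double doubleK.
have k2_le_h : (k.*2 <= h)%N.
  by move: k_lt; rewrite -(odd_double_half h); case: (odd h) => /=; lia.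
apply: (mulIf (expf_neq0 k n18)).
by rewrite mulrAC divfK ?expf_neq0 // term_identity.
Qed.

End PrimeField.

(* Divide the scaled sum by 3^h, using (3^h)^-1 = 3^h, and recognise
   2 * 2^h * 3^h - 3^h as 2 (6 / p) - (3 / p) by Euler's criterion. *)
Theorem corollary2p11 (p : nat) (hp : prime p) (hp3 : (3 < p)%N) :
  \sum_(0 <= k < (p %/ 4).+1) ('C(4 * k, 2 * k)%:R / (18%:R : 'F_p) ^+ k)
  = (2 * legendre 6 p - legendre 3 p)%:~R.
Proof.
have p_odd : odd p by case: (even_prime hp) => // p2; rewrite p2 in hp3.
have range : (p %/ 4).+1 = uphalf p./2.+1 by rewrite /= -!divn2 -divnMA.
have n3 : (3%:R : 'F_p) != 0 by rewrite natFp_neq0 //; lia.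
have n3h : (3%:R : 'F_p) ^+ p./2 != 0 by rewrite expf_neq0.
have inv3h : (3%:R ^+ p./2)^-1 = (3%:R : 'F_p) ^+ p./2.
  by apply: (mulfI n3h); rewrite mulfV // -exprD addnn fermat_half.
have p_ndvd3 : ~~ (p %| 3)%N by rewrite gtnNdvd.
have p_ndvd6 : ~~ (p %| 2 * 3)%N by rewrite Euclid_dvdM // negb_or !gtnNdvd //; lia.
rewrite range big_mkord -[LHS](mulfK n3h) scaled_sum // inv3h.
rewrite intrB intrM !euler_criterion // (_ : 6 = 2 * 3)%N // natrM exprMn exprS; ring.
Qed.
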